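(* Let $\alpha,\delta\in(0,1)$, $m=\alpha n$, $k>-\frac{\ln\left(\frac{2}{1+\delta}-1\right)}{\ln(1+\delta)}$, and let $\lambda^*<\frac12$ satisfy $H(\lambda^* )=\alpha\log_2(1+\delta)$. Then for all $\lambda<\lambda^*$, $$\lim_{n\to\infty}\sum_{1\le w\le\lambda n}\binom{n}{w}\frac{1}{2^m}\left(1+\left(1-2\frac{k\ln m}{m}\right)^w\right)^m=0.$$
   Context: $H(p)=-p\log_2p-(1-p)\log_2(1-p)$ is the binary entropy function; $\ln$ is the natural logarithm. *)

From Stdlib Require Import Reals.
From Coquelicot Require Import Coquelicot.
Open Scope R_scope.

Definition log2 (x : R) : R := ln x / ln 2.

Definition H (p : R) : R := - p * log2 p - (1 - p) * log2 (1 - p).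

Definition mm (alpha : R) (n : nat) : R := alpha * INR n.

Definition summand (alpha k : R) (n w : nat) : R :=
  let m := mm alpha n in
  Binomial.C n w * / Rpower 2 m * Rpower (1 + (1 - 2 * (k * ln m / m)) ^ w) m.

Definition S (alpha k lam : R) (n : nat) : R :=
  sum_f_R0 (fun w : nat =>
    if Nat.eqb w 0 then 0
    else if Rle_dec (INR w) (lam * INR n) then summand alpha k n w else 0) n.

From Stdlib Require Import Reals Lra Lia.
From Coquelicot Require Import Coquelicot.
Open Scope R_scope.

(* Write s = eps w with eps = 2 k ln m / m.  Since ln t <= t - 1 and (1 - eps)^w <= exp (-s),
   the factor ((1 + (1 - eps)^w) / 2)^m is at most exp (-(m/2) s/(1+s)).
   - For s <= (k-1)/2 it is at most m^(-k' w) with k' = 2k/(k+1) > 1; with C(n,w) <= e n^w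
     these terms form a geometric series of ratio n m^(-k'), which tends to 0.
   - For moderate s the factor is exp(-Omega(m)), while w = O(m / ln m) gives
     C(n,w) <= (1 + 1/ln m)^n (ln m)^w = exp(o(m)).
   - Once (1 - eps)^w <= eta := (1-delta)/(2(1+delta)), the factor is at most ((1+eta)/2)^m,
     and w <= lamstar n gives C(n,w) <= exp(n H_e(lamstar)) = (1+delta)^m; the product is
     ((3+delta)/4)^m.
   So the sum is at most 4 e n m^(-k') + (n+1) exp(-beta m). *)

Lemma ln_le_sub_1 x : 0 < x -> ln x <= x - 1.
Proof. intros Hx. pose proof (exp_ineq1_le (ln x)) as H. rewrite exp_ln in H by exact Hx. lra. Qed.

Lemma exp_le x y : x <= y -> exp x <= exp y.
Proof. intros [H|H]; [left; apply exp_increasing; exact H | subst; lra]. Qed.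

Lemma pow_exp_ln x n : 0 < x -> x ^ n = exp (INR n * ln x).
Proof. intros Hx. rewrite <- Rpower_pow by exact Hx. reflexivity. Qed.

Lemma exp_pow_INR a n : exp a ^ n = exp (INR n * a).
Proof. rewrite <- Rpower_pow by apply exp_pos. unfold Rpower. rewrite ln_exp. reflexivity. Qed.

Lemma pow_1_sub_le_exp e w : 0 <= e <= 1 -> (1 - e) ^ w <= exp (- (e * INR w)).
Proof.
  intros He. replace (- (e * INR w)) with (INR w * - e) by ring.
  rewrite <- exp_pow_INR. apply pow_incr. pose proof (exp_ineq1_le (- e)). lra.
Qed.

Lemma div_1_add_le_1_sub_exp s : 0 <= s -> s / (1 + s) <= 1 - exp (- s).
Proof.
  intros Hs. rewrite exp_Ropp. pose proof (exp_ineq1_le s).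
  assert (/ exp s <= / (1 + s)) by (apply Rinv_le_contravar; lra).
  replace (s / (1 + s)) with (1 - / (1 + s)) by (field; lra). lra.
Qed.

Lemma sum_f_R0_ge_term f n i :
  (forall j, 0 <= f j) -> (i <= n)%nat -> f i <= sum_f_R0 f n.
Proof.
  intros Hf. induction n as [|n IH]; intros Hi; simpl.
  - replace i with 0%nat by lia. lra.
  - pose proof (Hf (Datatypes.S n)). destruct (Nat.eq_dec i (Datatypes.S n)) as [->|Hne].
    + pose proof (cond_pos_sum f n Hf). lra.
    + specialize (IH ltac:(lia)). lra.
Qed.

Lemma pow_le_geometric_half r w : 0 <= r <= 1 / 2 -> (1 <= w)%nat ->
  r ^ w <= 2 * r * (1 / 2) ^ w.
Proof.
  intros Hr Hw. destruct w as [|w]; [lia|]. simpl.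
  pose proof (pow_incr r (1 / 2) w Hr). pose proof (pow_le r w (proj1 Hr)). nra.
Qed.

Lemma sum_geometric_half_le n : sum_f_R0 (fun w => (1 / 2) ^ w) n <= 2.
Proof.
  rewrite tech3 by lra. pose proof (pow_le (1 / 2) (Datatypes.S n) ltac:(lra)).
  unfold Rdiv at 1. rewrite Rmult_comm. replace (/ (1 - 1 / 2)) with 2 by field. lra.
Qed.

Lemma C_nonneg n w : 0 <= Binomial.C n w.
Proof.
  unfold Binomial.C. apply Rlt_le, Rdiv_lt_0_compat; [|apply Rmult_lt_0_compat];
    apply INR_fact_lt_0.
Qed.

(* A single term of the binomial expansion of (x + 1)^n. *)
Lemma binomial_le_pow_div n w x : 0 < x -> (w <= n)%nat ->
  Binomial.C n w <= (1 + x) ^ n / x ^ w.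
Proof.
  intros Hx Hw. pose proof (pow_lt x w Hx) as Hxw.
  apply (Rmult_le_reg_r (x ^ w)); [exact Hxw|].
  unfold Rdiv. rewrite Rmult_assoc, Rinv_l, Rmult_1_r by lra.
  rewrite Rplus_comm, binomial.
  set (f i := Binomial.C n i * x ^ i * 1 ^ (n - i)).
  apply Rle_trans with (f w).
  - unfold f. rewrite pow1. lra.
  - apply sum_f_R0_ge_term; [|exact Hw]. intros j. unfold f. rewrite pow1, Rmult_1_r.
    apply Rmult_le_pos; [apply C_nonneg | apply pow_le; lra].
Qed.

Lemma binomial_le_exp_div n w x : 0 < x -> (w <= n)%nat ->
  Binomial.C n w <= exp (INR n * x) / x ^ w.
Proof.
  intros Hx Hw. eapply Rle_trans; [apply binomial_le_pow_div; eauto|].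
  apply Rmult_le_compat_r; [left; apply Rinv_0_lt_compat, pow_lt; lra|].
  rewrite <- exp_pow_INR. apply pow_incr. pose proof (exp_ineq1_le x). lra.
Qed.



Definition entropy (p : R) : R := - p * ln p - (1 - p) * ln (1 - p).

(* The binomial term at x = p/(1-p), where x^(-w) is largest for w = pn since x <= 1. *)
Lemma binomial_le_exp_entropy n w p : 0 < p <= 1 / 2 -> INR w <= p * INR n ->
  Binomial.C n w <= exp (INR n * entropy p).
Proof.
  intros Hp Hwn. set (x := p / (1 - p)).
  assert (Hx : 0 < x) by (apply Rdiv_lt_0_compat; lra).
  assert (Hlnx : ln x = ln p - ln (1 - p)) by (apply ln_div; lra).
  assert (Hx1 : ln x <= 0).
  { rewrite <- ln_1. apply ln_le; [exact Hx|]. apply Rmult_le_reg_r with (1 - p); [lra|].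
    unfold x. field_simplify; lra. }
  assert (Hw : (w <= n)%nat) by (apply INR_le; pose proof (pos_INR n); nra).
  eapply Rle_trans; [apply binomial_le_pow_div; eauto|].
  replace (1 + x) with (/ (1 - p)) by (unfold x; field; lra).
  rewrite !pow_exp_ln, ln_Rinv by (try apply Rinv_0_lt_compat; lra).
  unfold Rdiv. rewrite <- exp_Ropp, <- exp_plus. apply exp_le.
  unfold entropy. rewrite Hlnx in Hx1 |- *.
  assert ((p * INR n - INR w) * (ln p - ln (1 - p)) <= 0) by nra. nra.
Qed.

Lemma is_lim_seq_scal_INR a : 0 < a -> is_lim_seq (fun n => a * INR n) p_infty.
Proof.
  intros Ha. apply is_lim_seq_spec. intros M.
  generalize (proj2 (is_lim_seq_spec _ _) is_lim_seq_INR (M / a)).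
  apply filter_imp. intros n Hn. simpl in Hn.
  apply (Rmult_lt_compat_l a) in Hn; [|exact Ha].
  replace (a * (M / a)) with M in Hn by (field; lra). exact Hn.
Qed.

Lemma is_lim_seq_ln u : is_lim_seq u p_infty -> is_lim_seq (fun n => ln (u n)) p_infty.
Proof.
  intros Hu. apply (is_lim_comp_seq ln u p_infty p_infty is_lim_ln_p); [|exact Hu].
  exists 0%nat. intros n _. discriminate.
Qed.

Lemma is_lim_seq_ln_div u : is_lim_seq u p_infty -> is_lim_seq (fun n => ln (u n) / u n) 0.
Proof.
  intros Hu. apply (is_lim_comp_seq (fun y => ln y / y) u p_infty 0 is_lim_div_ln_p); [|exact Hu].
  exists 0%nat. intros n _. discriminate.
Qed.

Lemma is_lim_seq_exp_opp u b : 0 < b -> is_lim_seq u p_infty ->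
  is_lim_seq (fun n => exp (- (b * u n))) 0.
Proof.
  intros Hb Hu. apply (is_lim_comp_seq exp _ m_infty 0 is_lim_exp_m).
  - exists 0%nat. intros n _. discriminate.
  - apply is_lim_seq_spec. intros M.
    generalize (proj2 (is_lim_seq_spec _ _) Hu (- M / b)).
    apply filter_imp. intros n Hn. simpl in Hn.
    apply (Rmult_lt_compat_l b) in Hn; [|exact Hb].
    replace (b * (- M / b)) with (- M) in Hn by (field; lra). lra.
Qed.

Lemma is_lim_seq_succ_mul_exp_opp b : 0 < b ->
  is_lim_seq (fun n => (INR n + 1) * exp (- (b * INR n))) 0.
Proof.
  intros Hb.
  assert (Hmul : is_lim_seq (fun n => (- (b * INR n)) * exp (- (b * INR n))) 0).
  { apply (is_lim_comp_seq (fun y => y * exp y) _ m_infty 0 is_lim_mul_exp_m).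
    - exists 0%nat. intros n _. discriminate.
    - apply (is_lim_seq_opp (fun n => b * INR n) p_infty). exact (is_lim_seq_scal_INR b Hb). }
  apply (is_lim_seq_scal_l _ (- / b)) in Hmul.
  assert (Hexp := is_lim_seq_exp_opp INR b Hb is_lim_seq_INR).
  generalize (is_lim_seq_plus' _ _ _ _ Hmul Hexp).
  simpl. rewrite Rmult_0_r, Rplus_0_r.
  apply is_lim_seq_ext. intros n. field. lra.
Qed.

Lemma is_lim_seq_eventually_lt u a : is_lim_seq u 0 -> 0 < a -> eventually (fun n => u n < a).
Proof.
  intros Hu Ha. generalize (proj2 (is_lim_seq_spec _ _) Hu (mkposreal a Ha)).
  apply filter_imp. intros n Hn. simpl in Hn. rewrite Rminus_0_r in Hn.
  pose proof (Rle_abs (u n)). lra.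
Qed.

Definition bias_pow (m e : R) (w : nat) : R := Rpower ((1 + (1 - e) ^ w) / 2) m.

Lemma bias_pow_le_exp m e w : 0 <= m -> 0 <= e <= 1 ->
  bias_pow m e w <= exp (- (m / 2 * (e * INR w / (1 + e * INR w)))).
Proof.
  intros Hm He. unfold bias_pow, Rpower. apply exp_le.
  set (y := (1 - e) ^ w).
  assert (Hy : 0 <= y) by (apply pow_le; lra).
  assert (Hys : e * INR w / (1 + e * INR w) <= 1 - y).
  { pose proof (pow_1_sub_le_exp e w He). pose proof (pos_INR w).
    pose proof (div_1_add_le_1_sub_exp (e * INR w) ltac:(nra)). unfold y. lra. }
  pose proof (ln_le_sub_1 ((1 + y) / 2) ltac:(lra)). nra.
Qed.

Lemma bias_pow_le_of_ge m e w L : 0 <= m -> 0 <= e <= 1 -> L <= e * INR w ->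
  bias_pow m e w <= Rpower ((1 + exp (- L)) / 2) m.
Proof.
  intros Hm He HL. unfold bias_pow. apply Rle_Rpower_l; [exact Hm|].
  pose proof (pow_le (1 - e) w ltac:(lra)). pose proof (pow_1_sub_le_exp e w He).
  assert (exp (- (e * INR w)) <= exp (- L)) by (apply exp_le; lra). lra.
Qed.

Lemma C_bias_pow_le_geometric n w m e c : 0 < INR n -> (w <= n)%nat -> 0 <= m ->
  0 <= e <= 1 -> 0 <= c -> e * INR w <= c ->
  Binomial.C n w * bias_pow m e w <= exp 1 * (INR n * exp (- (m * e / (2 * (1 + c))))) ^ w.
Proof.
  intros Hn Hw Hm He Hc Hs. pose proof (pos_INR w) as Hw0.
  assert (HC : Binomial.C n w <= exp 1 * INR n ^ w).
  { eapply Rle_trans; [apply (binomial_le_exp_div n w (/ INR n)); auto with real|].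
    rewrite pow_inv. unfold Rdiv. rewrite Rinv_inv.
    replace (INR n * / INR n) with 1 by (field; lra). lra. }
  assert (Hb : bias_pow m e w <= exp (- (m * e / (2 * (1 + c)))) ^ w).
  { eapply Rle_trans; [apply bias_pow_le_exp; auto|]. rewrite exp_pow_INR. apply exp_le.
    assert (e * INR w / (1 + c) <= e * INR w / (1 + e * INR w)).
    { apply Rmult_le_compat_l; [nra|]. apply Rinv_le_contravar; nra. }
    replace (INR w * - (m * e / (2 * (1 + c)))) with (- (m / 2 * (e * INR w / (1 + c))))
      by (field; lra).
    nra. }
  rewrite Rpow_mult_distr, <- Rmult_assoc.
  apply Rmult_le_compat; auto using C_nonneg.
  unfold bias_pow, Rpower. left; apply exp_pos.
Qed.

Lemma C_bias_pow_le_exp n w m e c l : 0 < l -> (w <= n)%nat -> 0 <= m ->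
  0 <= e <= 1 -> 0 <= c <= e * INR w ->
  Binomial.C n w * bias_pow m e w <= exp (INR n / l + INR w * ln l - m * (c / (2 * (1 + c)))).
Proof.
  intros Hl Hw Hm He Hc.
  assert (HC : Binomial.C n w <= exp (INR n / l + INR w * ln l)).
  { eapply Rle_trans; [apply (binomial_le_exp_div n w (/ l)); auto with real|].
    rewrite pow_inv. unfold Rdiv. rewrite Rinv_inv, (pow_exp_ln l), <- exp_plus by lra. lra. }
  assert (Hb : bias_pow m e w <= exp (- (m * (c / (2 * (1 + c)))))).
  { eapply Rle_trans; [apply bias_pow_le_exp; auto|]. apply exp_le.
    assert (c / (1 + c) <= e * INR w / (1 + e * INR w)).
    { replace (c / (1 + c)) with (1 - / (1 + c)) by (field; lra).
      replace (e * INR w / (1 + e * INR w)) with (1 - / (1 + e * INR w)) by (field; lra).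
      assert (/ (1 + e * INR w) <= / (1 + c)) by (apply Rinv_le_contravar; lra). lra. }
    replace (m * (c / (2 * (1 + c)))) with (m / 2 * (c / (1 + c))) by (field; lra). nra. }
  unfold Rminus. rewrite exp_plus.
  apply Rmult_le_compat; auto using C_nonneg.
  unfold bias_pow, Rpower. left; apply exp_pos.
Qed.

Lemma summand_eq alpha k n w : 2 * (k * ln (mm alpha n) / mm alpha n) <= 1 ->
  summand alpha k n w =
  Binomial.C n w * bias_pow (mm alpha n) (2 * (k * ln (mm alpha n) / mm alpha n)) w.
Proof.
  intros He. unfold summand, bias_pow. cbv zeta.
  set (m := mm alpha n) in *. set (y := (1 - 2 * (k * ln m / m)) ^ w).
  assert (Hy : 0 <= y) by (apply pow_le; lra).
  unfold Rpower. rewrite ln_div, <- exp_Ropp, Rmult_assoc, <- exp_plus by lra.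
  do 2 f_equal. ring.
Qed.

Lemma summand_nonneg alpha k n w : 0 <= summand alpha k n w.
Proof.
  unfold summand, Rpower. cbv zeta.
  apply Rmult_le_pos; [apply Rmult_le_pos|]; auto using C_nonneg.
  - left; apply Rinv_0_lt_compat, exp_pos.
  - left; apply exp_pos.
Qed.

Section Vanishing_sum.

Variables alpha delta k lamstar : R.
Hypothesis Halpha : 0 < alpha.
Hypothesis Hdelta : 0 < delta < 1.
Hypothesis Hk : 1 < k.
Hypothesis Hlamstar : 0 < lamstar <= 1 / 2.
Hypothesis Hentropy : entropy lamstar = alpha * ln (1 + delta).

Let c := (k - 1) / 2.
Let kp := k / (1 + c).
Let gam := c / (2 * (1 + c)).
Let eta := (1 - delta) / (2 * (1 + delta)).
Let L := - ln eta.
Let kap := - ln ((3 + delta) / 4).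
Let beta := Rmin (gam / 2) kap.

Let m (n : nat) := mm alpha n.
Let l (n : nat) := ln (m n).
Let eps (n : nat) := 2 * (k * l n / m n).
Let rate (n : nat) := INR n * exp (- (kp * l n)).

Fact c_pos : 0 < c.
Proof. unfold c; lra. Qed.

Fact kp_gt_1 : 1 < kp.
Proof.
  pose proof c_pos. unfold kp. apply (Rmult_lt_reg_r (1 + c)); [lra|].
  unfold Rdiv. rewrite Rmult_assoc, Rinv_l by lra. unfold c; lra.
Qed.

Fact gam_pos : 0 < gam.
Proof. pose proof c_pos. unfold gam. apply Rdiv_lt_0_compat; lra. Qed.

Fact eta_bounds : 0 < eta < 1.
Proof.
  unfold eta. split; [apply Rdiv_lt_0_compat; lra|].
  apply (Rmult_lt_reg_r (2 * (1 + delta))); [lra|].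
  unfold Rdiv. rewrite Rmult_assoc, Rinv_l by lra. lra.
Qed.

Fact L_pos : 0 < L.
Proof.
  pose proof eta_bounds. unfold L.
  assert (ln eta < 0) by (rewrite <- ln_1; apply ln_increasing; lra). lra.
Qed.

Fact exp_opp_L : exp (- L) = eta.
Proof. pose proof eta_bounds. unfold L. rewrite Ropp_involutive. apply exp_ln. lra. Qed.

Fact kap_pos : 0 < kap.
Proof.
  unfold kap. assert (ln ((3 + delta) / 4) < 0) by (rewrite <- ln_1; apply ln_increasing; lra).
  lra.
Qed.

Fact beta_pos : 0 < beta.
Proof.
  pose proof gam_pos. pose proof kap_pos. unfold beta, Rmin.
  destruct (Rle_dec (gam / 2) kap); lra.
Qed.

Fact m_pos n : 0 < INR n -> 0 < m n.
Proof. intros Hn. unfold m, mm. nra. Qed.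

Fact rate_nonneg n : 0 <= rate n.
Proof. unfold rate. apply Rmult_le_pos; [apply pos_INR | left; apply exp_pos]. Qed.

Fact geometric_term_nonneg n w : 0 <= 2 * exp 1 * rate n * (1 / 2) ^ w.
Proof.
  pose proof (exp_pos 1). apply Rmult_le_pos; [apply Rmult_le_pos | apply pow_le]; try lra.
  apply rate_nonneg.
Qed.

Lemma summand_small_le n w : 0 < INR n -> (1 <= w <= n)%nat -> 0 < eps n <= 1 ->
  eps n * INR w <= c -> rate n <= 1 / 2 ->
  Binomial.C n w * bias_pow (m n) (eps n) w <= 2 * exp 1 * rate n * (1 / 2) ^ w.
Proof.
  intros Hn Hw He Hs Hr. pose proof c_pos. pose proof (m_pos n Hn).
  eapply Rle_trans.
  { apply (C_bias_pow_le_geometric _ _ _ _ c); try split; (lia || lra). }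
  replace (m n * eps n / (2 * (1 + c))) with (kp * l n) by (unfold eps, kp; field; lra).
  fold (rate n). pose proof (exp_pos 1). pose proof (rate_nonneg n).
  pose proof (pow_le_geometric_half (rate n) w ltac:(lra) ltac:(lia)). nra.
Qed.

Lemma summand_moderate_le n w : 0 < INR n -> (w <= n)%nat -> 1 <= l n ->
  4 / (alpha * gam) <= l n -> ln (l n) <= k * gam / (2 * L) * l n ->
  0 < eps n <= 1 -> c <= eps n * INR w <= L ->
  Binomial.C n w * bias_pow (m n) (eps n) w <= exp (- (gam / 2 * m n)).
Proof.
  intros Hn Hw Hl1 Hl2 Hlnl He Hs. pose proof c_pos. pose proof gam_pos. pose proof L_pos.
  pose proof (m_pos n Hn). pose proof (pos_INR w).
  eapply Rle_trans.
  { apply (C_bias_pow_le_exp _ _ _ _ c (l n)); try split; (lia || lra). }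
  apply exp_le. fold gam.
  assert (Hnl : INR n / l n <= gam * m n / 4).
  { assert (4 <= alpha * gam * l n).
    { apply (Rmult_le_reg_r (/ (alpha * gam))); [apply Rinv_0_lt_compat; nra|].
      replace (alpha * gam * l n * / (alpha * gam)) with (l n) by (field; lra). exact Hl2. }
    unfold m, mm. apply (Rmult_le_reg_r (4 * l n)); [lra|].
    replace (INR n / l n * (4 * l n)) with (4 * INR n) by (field; lra). nra. }
  assert (Hwl : INR w * l n <= L * m n / (2 * k)).
  { unfold eps in Hs. apply (Rmult_le_reg_r (2 * k / m n)); [apply Rdiv_lt_0_compat; lra|].
    replace (L * m n / (2 * k) * (2 * k / m n)) with L by (field; lra).
    replace (INR w * l n * (2 * k / m n)) with (2 * (k * l n / m n) * INR w) by (field; lra).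
    lra. }
  assert (Hwlnl : INR w * ln (l n) <= gam * m n / 4).
  { apply Rle_trans with (k * gam / (2 * L) * (INR w * l n)).
    - replace (k * gam / (2 * L) * (INR w * l n)) with (INR w * (k * gam / (2 * L) * l n)) by ring.
      apply Rmult_le_compat_l; lra.
    - replace (gam * m n / 4) with (k * gam / (2 * L) * (L * m n / (2 * k))) by (field; lra).
      apply Rmult_le_compat_l; [|exact Hwl]. apply Rdiv_le_0_compat; nra. }
  lra.
Qed.

Lemma summand_large_le n w : 0 < INR n -> 0 < eps n <= 1 -> L <= eps n * INR w ->
  INR w <= lamstar * INR n ->
  Binomial.C n w * bias_pow (m n) (eps n) w <= exp (- (kap * m n)).
Proof.
  intros Hn He Hs Hw. pose proof eta_bounds. pose proof (m_pos n Hn).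
  assert (HC : Binomial.C n w <= Rpower (1 + delta) (m n)).
  { eapply Rle_trans; [apply (binomial_le_exp_entropy n w lamstar); assumption|].
    rewrite Hentropy. unfold Rpower, m, mm. right. f_equal. ring. }
  assert (Hb : bias_pow (m n) (eps n) w <= Rpower ((1 + eta) / 2) (m n)).
  { rewrite <- exp_opp_L. apply bias_pow_le_of_ge; lra. }
  eapply Rle_trans.
  { apply Rmult_le_compat; [apply C_nonneg | unfold bias_pow, Rpower; left; apply exp_pos
                           | exact HC | exact Hb]. }
  rewrite Rpower_mult_distr by lra.
  replace ((1 + delta) * ((1 + eta) / 2)) with ((3 + delta) / 4) by (unfold eta; field; lra).
  unfold Rpower, kap. right. f_equal. ring.
Qed.

Let large (n : nat) : Prop :=
  0 < INR n /\ eps n < 1 /\ 1 <= l n /\ 4 / (alpha * gam) <= l n /\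
  ln (l n) <= k * gam / (2 * L) * l n /\ rate n <= 1 / 2.

Lemma summand_le n w : large n -> (1 <= w)%nat -> INR w <= lamstar * INR n ->
  summand alpha k n w <= 2 * exp 1 * rate n * (1 / 2) ^ w + exp (- (beta * m n)).
Proof.
  intros (Hn & He1 & Hl1 & Hl2 & Hlnl & Hr) Hw1 Hw. pose proof (m_pos n Hn).
  assert (He : 0 < eps n <= 1).
  { split; [|lra]. unfold eps. apply Rmult_lt_0_compat; [lra|].
    apply Rdiv_lt_0_compat; [nra | lra]. }
  assert (Hwn : (w <= n)%nat) by (apply INR_le; nra).
  replace (summand alpha k n w) with (Binomial.C n w * bias_pow (m n) (eps n) w)
    by (symmetry; apply summand_eq; exact (proj2 He)).
  pose proof (geometric_term_nonneg n w).
  assert (Hbeta : beta <= gam / 2 /\ beta <= kap) by (split; [apply Rmin_l | apply Rmin_r]).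
  destruct (Rle_lt_dec (eps n * INR w) c) as [HsA | HsB].
  - pose proof (exp_pos (- (beta * m n))).
    pose proof (summand_small_le n w Hn ltac:(lia) He HsA Hr). lra.
  - assert (Hexp : forall a, beta <= a -> exp (- (a * m n)) <= exp (- (beta * m n))).
    { intros a Ha. apply exp_le. nra. }
    destruct (Rle_lt_dec (eps n * INR w) L) as [HsL | HsL].
    + pose proof (summand_moderate_le n w Hn Hwn Hl1 Hl2 Hlnl He ltac:(lra)).
      pose proof (Hexp (gam / 2) (proj1 Hbeta)). lra.
    + pose proof (summand_large_le n w Hn He ltac:(lra) Hw).
      pose proof (Hexp kap (proj2 Hbeta)). lra.
Qed.

Lemma S_le n lam : large n -> lam < lamstar ->
  S alpha k lam n <= 4 * exp 1 * rate n + (INR n + 1) * exp (- (beta * m n)).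
Proof.
  intros Hlarge Hlam. pose proof (proj1 Hlarge) as Hn.
  pose proof (exp_pos (- (beta * m n))). set (E := exp (- (beta * m n))) in *.
  pose proof (rate_nonneg n) as Hr.
  unfold S. eapply Rle_trans.
  { apply (sum_Rle _ (fun w => 2 * exp 1 * rate n * (1 / 2) ^ w + E)). intros w _.
    pose proof (geometric_term_nonneg n w).
    destruct (Nat.eqb_spec w 0) as [|Hw0]; [lra|].
    destruct (Rle_dec (INR w) (lam * INR n)) as [Hw|]; [|lra].
    apply summand_le; [exact Hlarge | lia | nra]. }
  rewrite plus_sum, sum_cte, S_INR.
  replace (sum_f_R0 (fun w => 2 * exp 1 * rate n * (1 / 2) ^ w) n)
    with (2 * exp 1 * rate n * sum_f_R0 (fun w => (1 / 2) ^ w) n)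
    by (rewrite scal_sum; apply sum_eq; intros; ring).
  pose proof (sum_geometric_half_le n). pose proof (exp_pos 1).
  assert (0 <= 2 * exp 1 * rate n) by nra. nra.
Qed.

Fact is_lim_seq_l : is_lim_seq l p_infty.
Proof. exact (is_lim_seq_ln _ (is_lim_seq_scal_INR alpha Halpha)). Qed.

Fact is_lim_seq_eps : is_lim_seq eps 0.
Proof.
  assert (H := is_lim_seq_ln_div _ (is_lim_seq_scal_INR alpha Halpha)).
  apply (is_lim_seq_scal_l _ (2 * k)) in H. simpl in H. rewrite Rmult_0_r in H.
  revert H. apply is_lim_seq_ext. intros n. unfold eps, l, m, mm, Rdiv. ring.
Qed.

Fact is_lim_seq_rate : is_lim_seq rate 0.
Proof.
  apply is_lim_seq_ext_loc with (fun n => exp (- ((kp - 1) * l n)) * / alpha).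
  - exists 1%nat. intros n Hn. assert (Hn0 : 0 < INR n) by (apply lt_0_INR; lia).
    pose proof (m_pos n Hn0). unfold rate.
    replace (- ((kp - 1) * l n)) with (l n + - (kp * l n)) by ring.
    rewrite exp_plus. unfold l at 1. rewrite exp_ln by lra. unfold m, mm. field. lra.
  - rewrite <- (Rbar_mult_0_l (/ alpha)).
    apply is_lim_seq_scal_r, is_lim_seq_exp_opp; [pose proof kp_gt_1; lra | exact is_lim_seq_l].
Qed.

Lemma eventually_large : eventually large.
Proof.
  pose proof gam_pos. pose proof L_pos.
  assert (Hn : eventually (fun n => 0 < INR n)).
  { exists 1%nat. intros n Hn. apply lt_0_INR. lia. }
  assert (Hl : eventually (fun n => Rmax 1 (4 / (alpha * gam)) < l n)).
  { exact (proj2 (is_lim_seq_spec _ _) is_lim_seq_l _). }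
  assert (Hlnl : eventually (fun n => ln (l n) / l n < k * gam / (2 * L))).
  { apply is_lim_seq_eventually_lt; [exact (is_lim_seq_ln_div _ is_lim_seq_l)|].
    apply Rdiv_lt_0_compat; nra. }
  assert (He := is_lim_seq_eventually_lt _ 1 is_lim_seq_eps Rlt_0_1).
  assert (Hr := is_lim_seq_eventually_lt _ (1 / 2) is_lim_seq_rate ltac:(lra)).
  generalize (filter_and _ _ Hn (filter_and _ _ Hl (filter_and _ _ Hlnl (filter_and _ _ He Hr)))).
  apply filter_imp. intros n (Hn0 & Hln & Hlnln & Hen & Hrn).
  pose proof (Rmax_l 1 (4 / (alpha * gam))). pose proof (Rmax_r 1 (4 / (alpha * gam))).
  repeat split; try lra.
  apply (Rmult_le_reg_r (/ l n)); [apply Rinv_0_lt_compat; lra|].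
  replace (k * gam / (2 * L) * l n * / l n) with (k * gam / (2 * L)) by (field; lra).
  left; exact Hlnln.
Qed.

Lemma S_vanishes lam : lam < lamstar -> is_lim_seq (fun n => S alpha k lam n) 0.
Proof.
  intros Hlam.
  apply is_lim_seq_le_le_loc with (fun _ => 0)
    (fun n => 4 * exp 1 * rate n + (INR n + 1) * exp (- (beta * alpha * INR n))).
  - generalize eventually_large. apply filter_imp. intros n Hn. split.
    + unfold S. apply cond_pos_sum. intros w.
      destruct (Nat.eqb w 0); [lra|]. destruct (Rle_dec _ _); [apply summand_nonneg | lra].
    + replace (beta * alpha * INR n) with (beta * m n) by (unfold m, mm; ring).
      exact (S_le n lam Hn Hlam).
  - apply is_lim_seq_const.
  - replace (Finite 0) with (Finite (4 * exp 1 * 0 + 0)) by (f_equal; ring).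
    apply is_lim_seq_plus'.
    + apply (is_lim_seq_scal_l _ (4 * exp 1) 0), is_lim_seq_rate.
    + apply is_lim_seq_succ_mul_exp_opp. pose proof beta_pos. nra.
Qed.

End Vanishing_sum.

Lemma ln_ratio_threshold_gt_1 delta : 0 < delta < 1 ->
  1 < - ln (2 / (1 + delta) - 1) / ln (1 + delta).
Proof.
  intros Hd.
  assert (Hp : 0 < ln (1 + delta)) by (rewrite <- ln_1; apply ln_increasing; lra).
  assert (Hm : ln (1 - delta) < 0) by (rewrite <- ln_1; apply ln_increasing; lra).
  replace (2 / (1 + delta) - 1) with ((1 - delta) / (1 + delta)) by (field; lra).
  rewrite ln_div by lra.
  replace (- (ln (1 - delta) - ln (1 + delta)) / ln (1 + delta))
    with (1 + - ln (1 - delta) / ln (1 + delta)) by (field; lra).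
  assert (0 < - ln (1 - delta) / ln (1 + delta)) by (apply Rdiv_lt_0_compat; lra). lra.
Qed.

Lemma entropy_eq_H p : entropy p = H p * ln 2.
Proof.
  pose proof ln_lt_2 as Hln2. unfold entropy, H, log2. field. lra.
Qed.

Theorem lemma7 (alpha delta k lamstar : R)
  (Halpha : 0 < alpha < 1) (Hdelta : 0 < delta < 1)
  (Hk : k > - ln (2 / (1 + delta) - 1) / ln (1 + delta))
  (Hls : 0 < lamstar < 1 / 2)
  (HH : H lamstar = alpha * log2 (1 + delta)) :
  forall lam : R, lam < lamstar ->
    is_lim_seq (fun n : nat => S alpha k lam n) 0.
Proof.
  intros lam Hlam. apply (S_vanishes alpha delta k lamstar); try lra.
  - pose proof (ln_ratio_threshold_gt_1 delta Hdelta). lra.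
  - pose proof ln_lt_2 as Hln2. rewrite entropy_eq_H, HH. unfold log2. field. lra.
Qed.
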